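(* Let $G$ be a simple graph on $n$ vertices with $cM_2(G)\ge cM_2(H)$ for every simple graph $H$ on $n$ vertices, and let $X$ be as defined in the context. Then every $u\in X$ satisfies $d_{G[X]}(u)\ge |X|-2$.
   Context: All graphs are finite and simple; $d_G(u)$ is the degree of $u$ and $cM_2(G)=\sum_{uv\in E(G)}|d_G(u)^2-d_G(v)^2|$; $G[X]$ is the subgraph induced by $X$. The canonical mixed graph $F$ of $G$ has vertex set $V(G)$; for each edge $uv\in E(G)$: if $d_G(u)>d_G(v)$ then $F$ contains the arc $\overrightarrow{uv}$, and if $d_G(u)=d_G(v)$ then $F$ contains the undirected edge $uv$. $d^+_F(u)$ (resp. $d^-_F(u)$) is the number of arcs of $F$ with tail (resp. head) $u$. $X=\{u\in V(G): d^+_F(u)\ge d^-_F(u)\}$. *)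

From mathcomp Require Import all_boot all_order.
Set Implicit Arguments. Unset Strict Implicit. Unset Printing Implicit Defensive.

Definition simple_graph (n : nat) (e : rel 'I_n) : Prop :=
  symmetric e /\ irreflexive e.

Definition deg (n : nat) (e : rel 'I_n) (u : 'I_n) : nat := #|[set v | e u v]|.

Definition absdiff (a b : nat) : nat := maxn a b - minn a b.

Definition cM2 (n : nat) (e : rel 'I_n) : nat :=
  \sum_(u : 'I_n) \sum_(v : 'I_n | (u < v) && e u v)
     absdiff (deg e u ^ 2) (deg e v ^ 2).

(* Canonical mixed graph F: arc u->v iff uv in E(G) and d(u) > d(v). *)
Definition outdegF (n : nat) (e : rel 'I_n) (u : 'I_n) : nat :=
  #|[set v | e u v && (deg e v < deg e u)]|.
Definition indegF (n : nat) (e : rel 'I_n) (u : 'I_n) : nat :=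
  #|[set v | e u v && (deg e u < deg e v)]|.

Definition Xset (n : nat) (e : rel 'I_n) : {set 'I_n} :=
  [set u | indegF e u <= outdegF e u].

Definition deg_induced (n : nat) (e : rel 'I_n) (A : {set 'I_n}) (u : 'I_n) : nat :=
  #|[set v in A | e u v]|.

From mathcomp Require Import all_boot all_order all_algebra zify ring.
Import Order.TTheory GRing.Theory Num.Theory.
Set Implicit Arguments. Unset Strict Implicit. Unset Printing Implicit Defensive.
Local Open Scope ring_scope.

(* Adding an edge ab to a simple graph changes cM2 by
   |(d(a)+1)^2 - (d(b)+1)^2| + (2 d(a) + 1) beta(a) + (2 d(b) + 1) beta(b),
   where beta(x) is the number of neighbours y of x with d(y) <= d(x) minus the
   number with d(y) > d(x); thus beta >= d^+_F - d^-_F >= 0 on X.  In a cM2-maximal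
   graph, two non-adjacent u, v in X must therefore have equal degrees and
   beta(v) = 0, so v has no neighbour of its own degree.  If u had two such
   non-neighbours v, w in X, they would be non-adjacent, and adding uv and then uw
   would strictly increase cM2, since after the first step d(u) = d(w) + 1. *)

Lemma absdiffC m k : absdiff m k = absdiff k m.
Proof. by rewrite /absdiff maxnC minnC. Qed.

Lemma absdiff_sqSl (m k : nat) :
  (absdiff (m.+1 ^ 2) (k ^ 2))%:Z - (absdiff (m ^ 2) (k ^ 2))%:Z
  = (2 * m + 1)%:Z * (if (k <= m)%N then 1 else -1).
Proof.
rewrite /absdiff; case: leqP => km.
- have : (k ^ 2 <= m ^ 2)%N by rewrite leq_exp2r.
  by rewrite mulr1; lia.
- have : (m.+1 ^ 2 <= k ^ 2)%N by rewrite leq_exp2r.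
  by rewrite mulrN1; lia.
Qed.

Lemma sum_if_eq (T : finType) (c : T) (K : T -> int) :
  \sum_x (if x == c then K x else 0) = K c.
Proof. by rewrite -big_mkcond big_pred1_eq. Qed.

Section Graph.
Variable n : nat.
Implicit Types (g h : rel 'I_n) (x y : 'I_n).

Definition add_edge g (a b : 'I_n) : rel 'I_n :=
  fun x y => g x y || ((x == a) && (y == b)) || ((x == b) && (y == a)).

Definition edge_cM2 g x y : int := (absdiff (deg g x ^ 2) (deg g y ^ 2))%:Z.

Definition deg_sign g x y : int := if (deg g y <= deg g x)%N then 1 else -1.

Definition balance g x : int := \sum_(y | g x y) deg_sign g x y.

Definition cM2_ord g : int := \sum_x \sum_(y | g x y) edge_cM2 g x y.

Lemma edge_cM2C g x y : edge_cM2 g x y = edge_cM2 g y x.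
Proof. by rewrite /edge_cM2 absdiffC. Qed.

Lemma cM2_ordE g : simple_graph g -> cM2_ord g = (cM2 g)%:Z *+ 2.
Proof.
move=> [gC g_irr].
have sumz (I : Type) (r : seq I) (P : pred I) (F : I -> nat) :
    (\sum_(i <- r | P i) F i)%N%:Z = \sum_(i <- r | P i) (F i)%:Z.
  exact: (big_morph Posz PoszD (erefl _)).
have split_row x : \sum_(y | g x y) edge_cM2 g x y =
    \sum_(y : 'I_n) (if (x < y)%N && g x y then edge_cM2 g x y else 0)
  + \sum_(y : 'I_n) (if (y < x)%N && g x y then edge_cM2 g x y else 0).
  rewrite big_mkcond -big_split; apply: eq_bigr => y _ /=.
  by case: ltngtP => [||/val_inj->] /=; rewrite ?g_irr ?addr0 ?add0r.
rewrite /cM2_ord (eq_bigr _ (fun x _ => split_row x)) big_split /= mulr2n.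
rewrite /cM2 sumz; congr (_ + _).
  by apply: eq_bigr => x _; rewrite sumz [RHS]big_mkcond.
rewrite exchange_big; apply: eq_bigr => y _; rewrite sumz [RHS]big_mkcond.
by apply: eq_bigr => x _; rewrite gC edge_cM2C.
Qed.

Section AddEdge.
Variables (g : rel 'I_n) (a b : 'I_n).
Hypotheses (g_simple : simple_graph g) (neq_ab : a != b) (nadj_ab : ~~ g a b).
Let h := add_edge g a b.

Lemma add_edge_simple : simple_graph h.
Proof.
have [gC g_irr] := g_simple; split.
  move=> x y; rewrite /h /add_edge gC -!orbA; congr (_ || _).
  by rewrite orbC andbC [(y == b) && _]andbC.
move=> x; rewrite /h /add_edge g_irr /=.
by case: (eqVneq x a) => [->|_]; rewrite /= ?(negbTE neq_ab) ?andbF.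
Qed.

Lemma deg_add_edge x : deg h x = (deg g x + (x == a) + (x == b))%N.
Proof.
have [gC _] := g_simple.
have neq_ba : b != a by rewrite eq_sym.
rewrite /deg; case: (eqVneq x a) => [->|xa].
  rewrite (negbTE neq_ab) addn0 addn1.
  have -> : [set v | h a v] = b |: [set v | g a v].
    by apply/setP => y; rewrite !inE /h /add_edge eqxx (negbTE neq_ab) orbF orbC.
  by rewrite cardsU1 inE (negbTE nadj_ab).
case: (eqVneq x b) => [->|xb].
  rewrite addn0 addn1.
  have -> : [set v | h b v] = a |: [set v | g b v].
    by apply/setP => y; rewrite !inE /h /add_edge eqxx (negbTE neq_ba) orbF orbC.
  by rewrite cardsU1 inE gC (negbTE nadj_ab).
rewrite !addn0; apply: eq_card => y.
by rewrite !inE /h /add_edge (negbTE xa) (negbTE xb) !orbF.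
Qed.

Lemma deg_add_edge_l : deg h a = (deg g a).+1.
Proof. by rewrite deg_add_edge eqxx (negbTE neq_ab) addn0 addn1. Qed.

Lemma deg_add_edge_r : deg h b = (deg g b).+1.
Proof. by rewrite deg_add_edge eqxx eq_sym (negbTE neq_ab) addn0 addn1. Qed.

Lemma deg_add_edge_other x : x != a -> x != b -> deg h x = deg g x.
Proof. by move=> xa xb; rewrite deg_add_edge (negbTE xa) (negbTE xb) !addn0. Qed.

Lemma edge_cM2_add_edge_endpoint c x : deg h c = (deg g c).+1 ->
  x != a -> x != b -> edge_cM2 h c x - edge_cM2 g c x = (2 * deg g c + 1)%:Z * deg_sign g c x.
Proof.
by move=> hc xa xb; rewrite /edge_cM2 hc deg_add_edge_other // absdiff_sqSl.
Qed.

Let endpoint_term c x y : int :=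
  if (x == c) && g c y then (2 * deg g c + 1)%:Z * deg_sign g c y else 0.

Let new_edge_term x y : int :=
  (if (x == a) && (y == b) then edge_cM2 h a b else 0)
  + (if (x == b) && (y == a) then edge_cM2 h a b else 0).

Lemma add_edge_term_diff x y :
  (if h x y then edge_cM2 h x y else 0) - (if g x y then edge_cM2 g x y else 0) =
  endpoint_term a x y + endpoint_term a y x + endpoint_term b x y
  + endpoint_term b y x + new_edge_term x y.
Proof.
have [gC g_irr] := g_simple.
have neq_ba : b != a by rewrite eq_sym.
have nadj_ba : ~~ g b a by rewrite gC.
have hE : h x y = g x y || (x == a) && (y == b) || (x == b) && (y == a) by [].
rewrite hE /endpoint_term /new_edge_term.
have deg_a := deg_add_edge_l; have deg_b := deg_add_edge_r.
case: (eqVneq x a) => [->|xa]; [|case: (eqVneq x b) => [->|xb]];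
  (case: (eqVneq y a) => [->|ya]; [|case: (eqVneq y b) => [->|yb]]);
  rewrite /= ?eqxx ?(negbTE neq_ab) ?(negbTE neq_ba) ?g_irr ?(negbTE nadj_ab)
    ?(negbTE nadj_ba) /= ?addr0 ?add0r ?subr0 ?orbF.
all: try by [].
- by case: ifP => _; [exact: edge_cM2_add_edge_endpoint | rewrite subr0].
- exact: edge_cM2C.
- by case: ifP => _; [exact: edge_cM2_add_edge_endpoint | rewrite subr0].
- rewrite [g x a]gC !(edge_cM2C _ x).
  by case: ifP => _; [exact: edge_cM2_add_edge_endpoint | rewrite subr0].
- rewrite [g x b]gC !(edge_cM2C _ x).
  by case: ifP => _; [exact: edge_cM2_add_edge_endpoint | rewrite subr0].
- by case: ifP => _; rewrite /edge_cM2 ?deg_add_edge_other ?subrr.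
Qed.

Lemma sum_endpoint_term c :
  \sum_x \sum_y endpoint_term c x y = (2 * deg g c + 1)%:Z * balance g c.
Proof.
rewrite (eq_bigr (fun x => if x == c then \sum_y endpoint_term c c y else 0)).
  rewrite sum_if_eq /balance mulr_sumr [RHS]big_mkcond.
  by apply: eq_bigr => y _; rewrite /endpoint_term eqxx.
move=> x _; case: eqP => [->|/eqP xc] //.
by rewrite big1 // => y _; rewrite /endpoint_term (negbTE xc).
Qed.

Lemma sum_endpoint_term_swap c :
  \sum_x \sum_y endpoint_term c y x = (2 * deg g c + 1)%:Z * balance g c.
Proof. by rewrite exchange_big sum_endpoint_term. Qed.

Lemma sum_new_edge_term :
  \sum_x \sum_y (if (x == a) && (y == b) then edge_cM2 h a b else 0)
  + \sum_x \sum_y (if (x == b) && (y == a) then edge_cM2 h a b else 0)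
  = edge_cM2 h a b *+ 2.
Proof.
have sum_pair (c d : 'I_n) :
    \sum_x \sum_y (if (x == c) && (y == d) then edge_cM2 h a b else 0) = edge_cM2 h a b.
  have row x : \sum_y (if (x == c) && (y == d) then edge_cM2 h a b else 0)
      = if x == c then edge_cM2 h a b else 0.
    by case: (x == c); rewrite ?sum_if_eq // big1.
  by under eq_bigr do rewrite row; exact: sum_if_eq.
by rewrite !sum_pair mulr2n.
Qed.

Lemma cM2_ord_add_edge : cM2_ord h = cM2_ord g
  + (edge_cM2 h a b + (2 * deg g a + 1)%:Z * balance g a
     + (2 * deg g b + 1)%:Z * balance g b) *+ 2.
Proof.
suff diff : cM2_ord h - cM2_ord g = (edge_cM2 h a b + (2 * deg g a + 1)%:Z * balance g a
     + (2 * deg g b + 1)%:Z * balance g b) *+ 2 by rewrite -diff addrC subrK.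
rewrite /cM2_ord -sumrB.
under eq_bigr => x _ do rewrite (big_mkcond (h x)) (big_mkcond (g x)) -sumrB.
under eq_bigr do under eq_bigr do rewrite add_edge_term_diff.
under eq_bigr do rewrite !big_split.
rewrite !big_split /= !sum_endpoint_term !sum_endpoint_term_swap sum_new_edge_term.
by rewrite !mulr2n; ring.
Qed.

Lemma cM2_add_edge : (cM2 h)%:Z = (cM2 g)%:Z + edge_cM2 h a b
  + (2 * deg g a + 1)%:Z * balance g a + (2 * deg g b + 1)%:Z * balance g b.
Proof.
have := cM2_ord_add_edge.
rewrite !cM2_ordE //; last exact: add_edge_simple.
by rewrite !mulr2n; lia.
Qed.

Lemma balance_add_edge_l : (deg g b <= deg g a)%N -> balance g a < balance h a.
Proof.
have [_ g_irr] := g_simple.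
move=> le_ba; rewrite /balance [X in _ < X](bigD1 b) /=; last first.
  by rewrite /h /add_edge !eqxx /= orbT.
have -> : \sum_(y | h a y && (y != b)) deg_sign h a y = \sum_(y | g a y) deg_sign h a y.
  apply: eq_bigl => y; rewrite /h /add_edge eqxx (negbTE neq_ab) /= orbF.
  by case: eqP => [->|_]; rewrite ?(negbTE nadj_ab) ?andbT ?andbF ?orbF.
have sign_ab : deg_sign h a b = 1.
  by rewrite /deg_sign deg_add_edge_l deg_add_edge_r ltnS le_ba.
have sign_le : \sum_(y | g a y) deg_sign g a y <= \sum_(y | g a y) deg_sign h a y.
  apply: ler_sum => y ay.
  have ya : y != a by apply: contraTneq ay => ->; rewrite g_irr.
  have yb : y != b by apply: contraNneq nadj_ab => <-.
  rewrite /deg_sign deg_add_edge_l deg_add_edge_other //.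
  by case: (leqP (deg g y) (deg g a)) => [le_ya|_]; [rewrite (leqW le_ya) | case: ifP].
by rewrite sign_ab addrC; apply: le_lt_trans sign_le _; rewrite ltrDl.
Qed.

Lemma balance_add_edge_other x :
  x != a -> x != b -> ~~ g x a -> ~~ g x b -> balance h x = balance g x.
Proof.
move=> xa xb nxa nxb.
have hxE y : h x y = g x y by rewrite /h /add_edge (negbTE xa) (negbTE xb) !orbF.
rewrite /balance (eq_bigl _ _ hxE); apply: eq_bigr => y xy.
have ya : y != a by apply: contraNneq nxa => <-.
have yb : y != b by apply: contraNneq nxb => <-.
by rewrite /deg_sign !deg_add_edge_other.
Qed.

End AddEdge.
End Graph.

Lemma cM2_add_edge_ge n (g : rel 'I_n) a b :
  simple_graph g -> a != b -> ~~ g a b -> 0 <= balance g a -> 0 <= balance g b ->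
  (cM2 g + absdiff ((deg g a).+1 ^ 2) ((deg g b).+1 ^ 2) <= cM2 (add_edge g a b))%N.
Proof.
move=> g_simple neq_ab nadj_ab ba_ge0 bb_ge0.
have Da : 0 <= (2 * deg g a + 1)%:Z * balance g a by rewrite mulr_ge0.
have Db : 0 <= (2 * deg g b + 1)%:Z * balance g b by rewrite mulr_ge0.
have := cM2_add_edge g_simple neq_ab nadj_ab.
rewrite /edge_cM2 deg_add_edge_l // deg_add_edge_r //; lia.
Qed.

Lemma balance_card n (g : rel 'I_n) x :
  balance g x = #|[set y | g x y && (deg g y <= deg g x)%N]|%:Z - (indegF g x)%:Z.
Proof.
have card_sum (P : pred 'I_n) : \sum_(y | P y) (1 : int) = #|[set y | P y]|%:Z.
  by rewrite -natz -sumr_const; apply: eq_bigl => y; rewrite inE.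
rewrite /indegF -!card_sum /balance big_mkcond [X in _ = X - _]big_mkcond.
rewrite [X in _ = _ - X]big_mkcond /= -sumrB; apply: eq_bigr => y _.
rewrite /deg_sign; case: (g x y) => /=; last by rewrite subrr.
by case: leqP => _ /=; rewrite ?subr0 ?sub0r.
Qed.

Lemma balance_ge0 n (g : rel 'I_n) x : x \in Xset g -> 0 <= balance g x.
Proof.
rewrite inE /outdegF => in_le_out; rewrite balance_card subr_ge0 lez_nat.
apply: leq_trans in_le_out _; apply: subset_leq_card; apply/subsetP => y.
by rewrite !inE => /andP [-> /ltnW ->].
Qed.

Lemma balance_gt0 n (g : rel 'I_n) x y :
  x \in Xset g -> g x y -> deg g y = deg g x -> 0 < balance g x.
Proof.
rewrite inE /outdegF => in_le_out xy deg_yx.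
rewrite balance_card subr_gt0 ltz_nat.
apply: leq_trans (proper_card _); first by rewrite ltnS; exact: in_le_out.
apply/properP; split.
  by apply/subsetP => z; rewrite !inE => /andP [-> /ltnW ->].
by exists y; rewrite !inE xy deg_yx ?leqnn ?ltnn.
Qed.

Definition cM2_maximal n (e : rel 'I_n) : Prop :=
  forall h : rel 'I_n, simple_graph h -> (cM2 h <= cM2 e)%N.

Lemma cM2_maximal_nonadj_Xset n (e : rel 'I_n) u v :
  simple_graph e -> cM2_maximal e ->
  u \in Xset e -> v \in Xset e -> u != v -> ~~ e u v ->
  deg e u = deg e v /\ balance e v = 0.
Proof.
move=> e_simple e_max uX vX neq_uv nadj_uv.
have le_e := e_max _ (add_edge_simple e_simple neq_uv).
have := cM2_add_edge e_simple neq_uv nadj_uv.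
rewrite /edge_cM2 deg_add_edge_l // deg_add_edge_r // => cM2E.
have bu := balance_ge0 uX; have bv := balance_ge0 vX.
have Du : 0 <= (2 * deg e u + 1)%:Z * balance e u by rewrite mulr_ge0.
have Dv : 0 <= (2 * deg e v + 1)%:Z * balance e v by rewrite mulr_ge0.
have sq_eq : ((deg e u).+1 ^ 2 = (deg e v).+1 ^ 2)%N by rewrite /absdiff in cM2E; lia.
split; first by apply/eqP; rewrite -eqSS -(eqn_exp2r _ _ (ltn0Sn 1)) sq_eq.
have : (2 * deg e v + 1)%:Z * balance e v = 0 by lia.
by move/eqP; rewrite mulf_eq0 => /orP [/eqP|/eqP //]; lia.
Qed.

Lemma cM2_maximal_Xset_nonadj_unique n (e : rel 'I_n) u v w :
  simple_graph e -> cM2_maximal e ->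
  u \in Xset e -> v \in Xset e -> w \in Xset e ->
  u != v -> u != w -> ~~ e u v -> ~~ e u w -> v = w.
Proof.
move=> e_simple e_max uX vX wX neq_uv neq_uw nadj_uv nadj_uw.
apply/eqP; apply: contraT => neq_vw.
have [eC _] := e_simple.
have [deg_uv bal_v] := cM2_maximal_nonadj_Xset e_simple e_max uX vX neq_uv nadj_uv.
have [deg_uw bal_w] := cM2_maximal_nonadj_Xset e_simple e_max uX wX neq_uw nadj_uw.
have nadj_wv : ~~ e w v.
  apply/negP => wv.
  by move: (balance_gt0 wX wv (etrans (esym deg_uv) deg_uw)); rewrite bal_w ltxx.
set h := add_edge e u v.
have h_simple : simple_graph h := add_edge_simple e_simple neq_uv.
have nadj_h_uw : ~~ h u w.
  by rewrite /h /add_edge (negbTE nadj_uw) eqxx eq_sym (negbTE neq_vw) (negbTE neq_uv).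
have le_e_h : (cM2 e <= cM2 h)%N.
  exact: leq_trans (leq_addr _ _)
    (cM2_add_edge_ge e_simple neq_uv nadj_uv (balance_ge0 uX) (balance_ge0 vX)).
have bal_h_u : 0 <= balance h u.
  apply/ltW/(le_lt_trans (balance_ge0 uX)).
  by apply: balance_add_edge_l; rewrite // deg_uv.
have bal_h_w : 0 <= balance h w.
  by rewrite /h balance_add_edge_other ?bal_w // ?(eq_sym w) ?[e w u]eC.
have := cM2_add_edge_ge h_simple neq_uw nadj_h_uw bal_h_u bal_h_w.
rewrite deg_add_edge_l // deg_add_edge_other // 1?eq_sym // -deg_uw.
have gap : (0 < absdiff ((deg e u).+2 ^ 2) ((deg e u).+1 ^ 2))%N.
  by rewrite /absdiff subn_gt0 (maxn_idPl _) ?(minn_idPr _) ?leq_exp2r ?ltn_exp2r // ltnW.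
have := e_max _ (add_edge_simple h_simple neq_uw).
lia.
Qed.

Local Close Scope ring_scope.

Theorem corollary1 (n : nat) (e : rel 'I_n) :
  simple_graph e ->
  (forall h : rel 'I_n, simple_graph h -> cM2 h <= cM2 e) ->
  forall u : 'I_n, u \in Xset e ->
    #|Xset e| - 2 <= deg_induced e (Xset e) u.
Proof.
move=> e_simple e_max u uX.
set X := Xset e.
set M := [set v in X | (v != u) && ~~ e u v].
have M_le1 : #|M| <= 1.
  apply/card_le1_eqP => v w /setIdP [vX /andP [vu nuv]] /setIdP [wX /andP [wu nuw]].
  by apply: (cM2_maximal_Xset_nonadj_unique e_simple e_max uX wX vX); rewrite // eq_sym.
have X_sub : X \subset [set u] :|: [set v in X | e u v] :|: M.
  apply/subsetP => v vX; move: (vX); rewrite !inE => ->.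
  by case: (v == u); case: (e u v).
have := subset_leq_card X_sub; rewrite !cardsU cards1 /deg_induced -/X; lia.
Qed.
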